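(* Let $A:\mathbb{R}^n\rightrightarrows\mathbb{R}^n$ be maximally monotone, let $x^*$ satisfy $0\in A(x^* )$, and let $\tilde A=I-J_A$ with $J_A=(I+A)^{-1}$; assume $\tilde A$ is differentiable. Let $X:[0,\infty)\to\mathbb{R}^n$ be continuous with $X(0)=x_0$, twice continuously differentiable on $(0,\infty)$, and a solution of $$\ddot X+\frac{2}{t}\dot X+\frac{2}{t}\tilde A(X)+2\nabla\tilde A(X)\dot X=0,\qquad t>0,$$ in the integrated form $t\dot X(t)+X(t)+2t\tilde A(X(t))=x_0$ for all $t>0$. Then for every $t>0$, $$\|\tilde A(X(t))\|^2\leqslant\frac{\|x_0-x^*\|^2}{t^2+2t},\qquad \langle\tilde A(X(t)),X(t)-x^*\rangle\leqslant\frac{\|x_0-x^*\|^2}{2t}.$$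
   Context: $J_A$ is the resolvent of $A$ and $\tilde A=I-J_A$ its Yosida approximation; $\nabla\tilde A$ denotes the Jacobian of $\tilde A$. The paper states that, with $X(0)=x_0$, the second-order ODE is equivalent to the first-order equation $t\dot X+X+2t\tilde A(X)=x_0$. *)

From HB Require Import structures.
From mathcomp Require Import all_boot all_order all_algebra.
From mathcomp Require Import all_classical all_reals all_analysis.
Set Implicit Arguments. Unset Strict Implicit. Unset Printing Implicit Defensive.
Import Order.TTheory GRing.Theory Num.Theory.
Import numFieldNormedType.Exports.
Local Open Scope classical_set_scope.
Local Open Scope ring_scope.

Definition dotv {R : realType} {n : nat} (u v : 'rV[R]_n) : R := (u *m v^T) 0 0.

(* A set-valued operator A : R^n ⇉ R^n is a map x |-> A x (a set);
   u ∈ A x is written A x u. *)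
Definition monotone_op {R : realType} {n : nat} (A : 'rV[R]_n -> set 'rV[R]_n) :=
  forall x y u v, A x u -> A y v -> 0 <= dotv (x - y) (u - v).

Definition maximally_monotone {R : realType} {n : nat} (A : 'rV[R]_n -> set 'rV[R]_n) :=
  monotone_op A /\
  forall B : 'rV[R]_n -> set 'rV[R]_n, monotone_op B ->
    (forall x u, A x u -> B x u) -> forall x u, B x u -> A x u.

(* J is the resolvent J_A = (I + A)^{-1}, as a (single-valued, everywhere
   defined) map:  y = J x  <->  x ∈ y + A y. *)
Definition is_resolvent {R : realType} {n : nat} (A : 'rV[R]_n -> set 'rV[R]_n)
  (J : 'rV[R]_n -> 'rV[R]_n) := forall x y, y = J x <-> A y (x - y).

Definition yosida {R : realType} {n : nat} (J : 'rV[R]_n -> 'rV[R]_n) : 'rV[R]_n -> 'rV[R]_n :=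
  fun x => x - J x.

(* Put a := Ã(X s) and lyap s := s <a, x0 - X s> - s^2 |a|^2.  Substituting the
   integrated equation x0 - X s = s X' + 2 s a, the derivative of lyap collapses to
   s^2 <∇Ã(X) X', X'>, which is nonnegative because Ã is monotone; and lyap s -> 0
   as s -> 0+.  Hence lyap t >= 0.  Firm nonexpansiveness of Ã together with Ã x* = 0
   gives |a|^2 <= <a, X t - x*>, and expanding |x0 - x* - t a|^2 >= 0 yields both
   bounds. *)

From HB Require Import structures.
From mathcomp Require Import all_boot all_order all_algebra.
From mathcomp Require Import all_classical all_reals all_analysis.
From mathcomp Require Import ring lra.
Import Order.TTheory GRing.Theory Num.Theory.
Import numFieldNormedType.Exports.
Local Open Scope classical_set_scope.
Local Open Scope ring_scope.

Section Dotv.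
Context {R : realType} {n : nat}.
Implicit Types u v w : 'rV[R]_n.

Lemma dotvE u v : dotv u v = \sum_(j < n) u 0 j * v 0 j.
Proof. by rewrite /dotv mxE; apply: eq_bigr => j _; rewrite mxE. Qed.

Lemma dotvC u v : dotv u v = dotv v u.
Proof. by rewrite !dotvE; apply: eq_bigr => j _; rewrite mulrC. Qed.

Lemma dotvDl u v w : dotv (u + v) w = dotv u w + dotv v w.
Proof. by rewrite !dotvE -big_split; apply: eq_bigr => j _; rewrite mxE mulrDl. Qed.

Lemma dotvZl (k : R) u w : dotv (k *: u) w = k * dotv u w.
Proof. by rewrite !dotvE mulr_sumr; apply: eq_bigr => j _; rewrite mxE mulrA. Qed.

Lemma dotvNl u w : dotv (- u) w = - dotv u w.
Proof. by rewrite -scaleN1r dotvZl mulN1r. Qed.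

Lemma dotvBl u v w : dotv (u - v) w = dotv u w - dotv v w.
Proof. by rewrite dotvDl dotvNl. Qed.

Lemma dotvDr u v w : dotv w (u + v) = dotv w u + dotv w v.
Proof. by rewrite dotvC dotvDl !(dotvC w). Qed.

Lemma dotvZr (k : R) u w : dotv w (k *: u) = k * dotv w u.
Proof. by rewrite dotvC dotvZl dotvC. Qed.

Lemma dotvNr u w : dotv w (- u) = - dotv w u.
Proof. by rewrite dotvC dotvNl dotvC. Qed.

Lemma dotvBr u v w : dotv w (u - v) = dotv w u - dotv w v.
Proof. by rewrite dotvDr dotvNr. Qed.

Lemma dotvv_ge0 u : 0 <= dotv u u.
Proof. by rewrite dotvE; apply: sumr_ge0 => j _; rewrite -expr2 sqr_ge0. Qed.

Lemma cvg_dotv {T : Type} {F : set_system T} {FF : Filter F}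
    {f g : T -> 'rV[R]_n} {u v} :
  f @ F --> u -> g @ F --> v -> (fun x => dotv (f x) (g x)) @ F --> dotv u v.
Proof.
move=> fu gv; rewrite dotvE.
have -> : (fun x => dotv (f x) (g x)) = (fun x => \sum_(j < n) f x 0 j * g x 0 j).
  by apply: funext => x; rewrite dotvE.
apply: cvg_big => [|j _]; first exact: add_continuous.
have fj := cvg_comp _ _ fu (@coord_continuous _ _ _ 0 j u).
have gj := cvg_comp _ _ gv (@coord_continuous _ _ _ 0 j v).
exact: (cvgM fj gj).
Qed.

Lemma is_derive_dotv {f g : R -> 'rV[R]_n} {t : R} :
  derivable f t 1 -> derivable g t 1 ->
  is_derive t 1 (fun s => dotv (f s) (g s))
     (dotv ('D_1 f t) (g t) + dotv (f t) ('D_1 g t)).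
Proof.
move=> df dg.
have -> : (fun s => dotv (f s) (g s)) = \sum_(j < n) (fun s => f s 0 j * g s 0 j).
  by apply: funext => s; rewrite dotvE fct_sumE.
have dfj j : derivable (fun s => f s 0 j) t 1 by move/derivable_mxP: df; apply.
have dgj j : derivable (fun s => g s 0 j) t 1 by move/derivable_mxP: dg; apply.
apply: (@is_derive_eq _ R R).
  apply: is_derive_sum => j.
  exact: is_deriveM (derivableP (dfj j)) (derivableP (dgj j)).
rewrite !dotvE -big_split; apply: eq_bigr => j _ /=.
rewrite (derive_mx df) (derive_mx dg) !mxE /= addrC /GRing.scale /=.
by rewrite mulrC [g t 0 j * _]mulrC.
Qed.

End Dotv.

Definition monotone_map {R : realType} {n : nat} (f : 'rV[R]_n -> 'rV[R]_n) :=
  forall x y, 0 <= dotv (x - y) (f x - f y).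

Lemma monotone_map_diff_ge0 {R : realType} {n : nat}
    (f : 'rV[R]_n -> 'rV[R]_n) x w :
  monotone_map f -> differentiable f x -> 0 <= dotv ('d f x w) w.
Proof.
move=> fmono df; rewrite -deriveE //.
have dfw : derivable f x w by exact: diff_derivable.
apply: (ler_cvg_to (cvg_cst 0) (cvg_dotv (dfw : _ --> 'D_w f x) (cvg_cst w))).
apply: nearW => h /=; rewrite dotvZl.
have := fmono (h *: w + x) x; rewrite addrK dotvZl dotvC.
set q := dotv _ w => hq.
have [->|h0] := eqVneq h 0; first by rewrite invr0 mul0r.
have -> : h^-1 * q = h^-1 ^+ 2 * (h * q) by rewrite expr2 -!mulrA mulKf.
by rewrite mulr_ge0 ?sqr_ge0.
Qed.

Section Yosida.
Context {R : realType} {n : nat}.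
Context {A : 'rV[R]_n -> set 'rV[R]_n} {J : 'rV[R]_n -> 'rV[R]_n}.
Hypothesis resJ : is_resolvent A J.
Local Notation Y := (yosida J).

Lemma resolvent_yosida x : A (J x) (Y x).
Proof. exact/(resJ x (J x)). Qed.

Lemma yosida_eq0 xs : A xs 0 -> Y xs = 0.
Proof.
move=> Axs; have : xs = J xs by apply/(resJ xs xs); rewrite subrr.
by rewrite /yosida => {1}->; rewrite subrr.
Qed.

Hypothesis monoA : monotone_op A.

Lemma yosida_firmly_nonexpansive x y :
  dotv (Y x - Y y) (Y x - Y y) <= dotv (x - y) (Y x - Y y).
Proof.
have := monoA _ _ _ _ (resolvent_yosida x) (resolvent_yosida y).
have -> : x - y = (J x - J y) + (Y x - Y y).
  by rewrite /yosida addrACA (addrC (J x)) addrNK opprB addKr.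
rewrite (dotvDl (J x - J y)); lra.
Qed.

Lemma yosida_monotone : monotone_map Y.
Proof. by move=> x y; exact: le_trans (dotvv_ge0 _) (yosida_firmly_nonexpansive x y). Qed.

Lemma yosida_dotv_le xs x : A xs 0 -> dotv (Y x) (Y x) <= dotv (Y x) (x - xs).
Proof.
move=> /yosida_eq0 Yxs; have := yosida_firmly_nonexpansive x xs.
by rewrite Yxs subr0 (dotvC (x - xs)).
Qed.

End Yosida.

Section Lyapunov.
Context {R : realType} {n : nat}.
Context (Y : 'rV[R]_n -> 'rV[R]_n) (X : R -> 'rV[R]_n) (x0 : 'rV[R]_n).
Hypothesis dY : forall x, differentiable Y x.
Hypothesis dX : forall t, 0 < t -> derivable X t 1.
Hypothesis first_order :
  forall t, 0 < t -> t *: derive1 X t + X t + (2 * t) *: Y (X t) = x0.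

Definition lyap (s : R) :=
  s * dotv (Y (X s)) (x0 - X s) - s * (s * dotv (Y (X s)) (Y (X s))).

Lemma is_derive_lyap (s : R) : 0 < s ->
  is_derive s 1 lyap (s ^+ 2 * dotv ('d Y (X s) ('D_1 X s)) ('D_1 X s)).
Proof.
move=> s0; have dXs := dX s s0.
set w := 'D_1 X s; set a := fun s => Y (X s).
have dXd : differentiable X s by apply/derivable1_diffP.
have ad : differentiable a s := differentiable_comp dXd (dY (X s)).
have da : derivable a s 1 by apply/derivable1_diffP.
have Da : 'D_1 a s = 'd Y (X s) w.
  by rewrite deriveE // /a -/(Y \o X) diff_comp //= /w deriveE.
have DV := is_deriveB (is_derive_cst x0 s 1) (derivableP dXs).
have dV : derivable (fun s => x0 - X s) s 1 by exact: ex_derive.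
have DVv : 'D_1 (fun s => x0 - X s) s = 0 - w by exact: derive_val.
have P1 := is_derive_dotv da dV.
have P2 := is_derive_dotv da da.
apply: (is_derive_eq (is_deriveB (is_deriveM (is_derive_id s 1) P1)
   (is_deriveM (is_derive_id s 1) (is_deriveM (is_derive_id s 1) P2)))).
have E : x0 - X s = s *: w + (2 * s) *: a s.
  by rewrite -(first_order s s0) derive1E (addrAC (s *: _)) addrK.
rewrite DVv Da E sub0r (dotvC (a s) (- w)) dotvNl (dotvC (a s) ('d Y (X s) w)).
rewrite !(dotvDr, dotvZr) (dotvC w (a s)) /GRing.scale /= !mulr1.
change ((id * _) s) with (s * dotv (a s) (a s)); ring.
Qed.

Hypothesis monoY : monotone_map Y.

Lemma lyap_nondecreasing (s t : R) : 0 < s -> s <= t -> lyap s <= lyap t.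
Proof.
move=> s0 st; have dlyap x : s <= x -> derivable lyap x 1.
  move=> sx.
  exact: (ex_derive (is_derive := is_derive_lyap x (lt_le_trans s0 sx))).
apply: (@ger0_derive1_ndecr _ lyap s t) => //.
- by move=> x; rewrite in_itv /= => /andP[/ltW sx _]; exact: dlyap.
- move=> x; rewrite in_itv /= => /andP[sx _].
  rewrite derive1E (derive_val (is_derive := is_derive_lyap x (lt_trans s0 sx))).
  by rewrite mulr_ge0 ?sqr_ge0 ?monotone_map_diff_ge0.
- apply: derivable_within_continuous => x; rewrite in_itv /= => /andP[sx _].
  exact: dlyap.
Qed.

Hypothesis cX0 : X s @[s --> 0^'+] --> x0.

Lemma lyap_cvg0 : lyap s @[s --> 0^'+] --> 0.
Proof.
have s_cvg0 : (fun s : R => s) @ 0^'+ --> 0.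
  by apply: cvg_at_right_filter; exact: cvg_id.
have cYX : (fun s => Y (X s)) @ 0^'+ --> Y x0.
  exact: cvg_comp cX0 (differentiable_continuous (dY x0)).
have cV : (fun s => x0 - X s) @ 0^'+ --> x0 - x0 by apply: cvgB => //; exact: cvg_cst.
rewrite [L in _ --> L]
  (_ : 0 = 0 * dotv (Y x0) (x0 - x0) - 0 * (0 * dotv (Y x0) (Y x0))).
  exact: cvgB (cvgM s_cvg0 (cvg_dotv cYX cV))
              (cvgM s_cvg0 (cvgM s_cvg0 (cvg_dotv cYX cYX))).
by rewrite !mul0r subr0.
Qed.

Lemma lyap_ge0 (t : R) : 0 < t -> 0 <= lyap t.
Proof.
move=> t0; apply: (ler_cvg_to lyap_cvg0 (cvg_cst (lyap t))).
near=> s; apply: lyap_nondecreasing.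
- by near: s; exact: nbhs_right_gt.
- by near: s; exact: nbhs_right_le.
Unshelve. all: by end_near.
Qed.

End Lyapunov.

Lemma dotv_rate_bounds {R : realType} {n : nat} (a z u : 'rV[R]_n) (t : R) :
  0 < t ->
  dotv a a <= dotv a z -> t * (t * dotv a a) <= t * dotv a (u - z) ->
  dotv a a <= dotv u u / (t ^+ 2 + 2 * t) /\ dotv a z <= dotv u u / (2 * t).
Proof.
move=> t0 aaz ht.
have := dotvv_ge0 (u - t *: a).
rewrite dotvBr (dotvC a u) in ht.
rewrite !(dotvBl, dotvBr, dotvZl, dotvZr) (dotvC a u) => sq_ge0.
have tq : 0 <= t * (dotv a z - dotv a a) by rewrite mulr_ge0 ?subr_ge0 // ltW.
have t2 : 0 < t ^+ 2 + 2 * t by rewrite addr_gt0 ?exprn_gt0 ?mulr_gt0.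
have ttaa : 0 <= t * (t * dotv a a) by rewrite !mulr_ge0 ?dotvv_ge0 ?ltW.
by split; rewrite ler_pdivlMr ?mulr_gt0 //; nra.
Qed.

Theorem theorem9 (R : realType) (n : nat) (A : 'rV[R]_n -> set 'rV[R]_n)
  (J : 'rV[R]_n -> 'rV[R]_n) (xstar x0 : 'rV[R]_n) (X : R -> 'rV[R]_n) :
  maximally_monotone A ->
  A xstar 0 ->
  is_resolvent A J ->
  (forall x, differentiable (yosida J) x) ->
  {within `[0, +oo[, continuous X} ->
  X 0 = x0 ->
  (forall t, 0 < t -> derivable X t 1) ->
  (forall t, 0 < t -> derivable (derive1 X) t 1) ->
  (forall t, 0 < t -> {for t, continuous (derive1n 2 X)}) ->
  (forall t, 0 < t ->
     derive1n 2 X t + (2 / t) *: derive1 X t + (2 / t) *: yosida J (X t)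
       + 2 *: ('d (yosida J) (X t) (derive1 X t)) = 0) ->
  (forall t, 0 < t -> t *: derive1 X t + X t + (2 * t) *: yosida J (X t) = x0) ->
  forall t, 0 < t ->
    dotv (yosida J (X t)) (yosida J (X t)) <= dotv (x0 - xstar) (x0 - xstar) / (t ^+ 2 + 2 * t)
    /\ dotv (yosida J (X t)) (X t - xstar) <= dotv (x0 - xstar) (x0 - xstar) / (2 * t).
Proof.
move=> [monoA _] Axs resJ dY cX X0 dX _ _ _ first_order t t0.
have cX0 : X s @[s --> 0^'+] --> x0.
  by rewrite -X0; exact: ((continuous_within_itvcyP 0 X).1 cX).2.
have := lyap_ge0 _ _ _ dY dX first_order (yosida_monotone resJ monoA) cX0 t t0.
rewrite /lyap subr_ge0 (_ : x0 - X t = (x0 - xstar) - (X t - xstar)); last first.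
  by rewrite opprB addrA subrK.
apply: dotv_rate_bounds => //; exact: yosida_dotv_le resJ monoA _ _ Axs.
Qed.
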